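(* Let $\lambda$ be a prime number, $\mathsf{R}$ a commutative ring and $f=\sum_{k=1}^t a_k\mathbf{x}^{\mathbf{e}_k}\in\mathsf{R}[x_1,\ldots,x_n]$, and suppose that a fixed term of $f$ avoids collision in the image $f(z^{s_1},\ldots,z^{s_n})$ for a uniformly random $\mathbf{s}\in\{0,\ldots,\lambda-1\}^n$ with probability at least $3/4$. Let $\mathbf{r}_1,\ldots,\mathbf{r}_{2n}$ be row vectors chosen independently and uniformly at random from $\{0,\ldots,\lambda-1\}^n$, and let $Q$ be the $2n\times n$ matrix with rows $\mathbf{r}_1,\ldots,\mathbf{r}_{2n}$. Then, conditioned on the event that this term of $f$ avoids collision in all of the images $f(z^{r_{i1}},\ldots,z^{r_{in}})$ for $1\le i\le 2n$, the matrix $Q$ has rank less than $n$ with probability at most $(9\lambda/16)^{-n}$.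
   Context: The $a_k$ are nonzero and the exponent vectors $\mathbf{e}_k\in\mathbb{Z}_{\ge0}^n$ pairwise distinct. The $i$th term of $f$ avoids collision under $\mathbf{s}$ if $\mathbf{e}_i\cdot\mathbf{s}\ne\mathbf{e}_j\cdot\mathbf{s}$ for all $j\ne i$. *)

From HB Require Import structures.
From mathcomp Require Import all_boot all_order all_algebra.
From mathcomp Require Import mpoly.
Set Implicit Arguments. Unset Strict Implicit. Unset Printing Implicit Defensive.
Import Order.TTheory GRing.Theory Num.Theory.
Local Open Scope ring_scope.

(* e . s, the exponent of z in x^e evaluated at x_i := z^(s_i). *)
Definition dotexp (n lam : nat) (e : 'X_{1..n}) (s : {ffun 'I_n -> 'I_lam}) : nat :=
  (\sum_(i < n) e i * s i)%N.

Definition avoids_collision (R : comNzRingType) (n lam : nat) (f : {mpoly R[n]})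
    (e : 'X_{1..n}) (s : {ffun 'I_n -> 'I_lam}) : bool :=
  all (fun e' => (e' != e) ==> (dotexp e' s != dotexp e s)) (msupp f).

Definition rowsmx (n lam : nat) (Q : {ffun 'I_(2 * n) -> {ffun 'I_n -> 'I_lam}}) :
    'M['F_lam]_(2 * n, n) :=
  \matrix_(i < 2 * n, j < n) ((Q i j : nat)%:R : 'F_lam).

From HB Require Import structures.
From mathcomp Require Import all_boot all_order all_algebra.
From mathcomp Require Import mpoly.
Import Order.TTheory GRing.Theory Num.Theory.
Set Implicit Arguments. Unset Strict Implicit.
Local Open Scope ring_scope.

(* The conditional probability is at most P(rank Q < n) / P(all 2n rows avoid
   collision).  A rank-deficient Q has a nonzero u in F_lam^n orthogonal to all
   its rows; for each of the fewer than lam^n choices of u, the hyperplane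
   u^perp contains lam^(n-1) points of {0..lam-1}^n, so P(rank Q < n) is at
   most lam^n * lam^(-2n).  As the rows are independent, the conditioning event
   has probability at least (3/4)^(2n), and the quotient is (16/(9 lam))^n. *)

Lemma leq_card_bigcup (I T : finType) (P : pred I) (F : I -> {set T}) :
  (#|\bigcup_(i | P i) F i| <= \sum_(i | P i) #|F i|)%N.
Proof.
apply: (big_ind2 (fun (A : {set T}) k => #|A| <= k)%N) => [|A m B k le_Am le_Bk|//].
  by rewrite cards0.
exact: leq_trans (leq_card_setU A B).1 (leq_add le_Am le_Bk).
Qed.

Lemma card_ffun_allin (I T : finType) (A : {set T}) :
  #|[set g : {ffun I -> T} | [forall i, g i \in A]]| = (#|A| ^ #|I|)%N.
Proof.
rewrite -card_ffun_on; apply: eq_card => g.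
by rewrite inE; apply/forallP/ffun_onP.
Qed.

Lemma exists_ker_row (F : fieldType) (m n : nat) (A : 'M[F]_(m, n)) :
  (\rank A < n)%N -> exists2 u : 'rV[F]_n, u != 0 & u *m A^T = 0.
Proof.
move=> rkA; have : kermx A^T != 0.
  by rewrite -mxrank_eq0 mxrank_ker mxrank_tr subn_eq0 -ltnNge.
by case/rowV0Pn => u /sub_kermxP uA u_nz; exists u.
Qed.

Lemma leq_expn2r (m1 m2 e : nat) : (m1 <= m2)%N -> (m1 ^ e <= m2 ^ e)%N.
Proof. by case: e => [//|e] le_m; rewrite leq_exp2r. Qed.

Section Hyperplanes.

Variables (p n : nat).
Hypothesis p_prime : prime p.

Lemma Fp_natr_inj (k l : 'I_p) : ((k : nat)%:R : 'F_p) = (l : nat)%:R -> k = l.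
Proof.
move=> kl; apply: val_inj => /=.
by rewrite -(modn_small (ltn_ord k)) -(modn_small (ltn_ord l)) -!val_Fp_nat ?kl.
Qed.

Definition hyperplane (u : 'rV['F_p]_n) : {set {ffun 'I_n -> 'I_p}} :=
  [set r : {ffun 'I_n -> 'I_p} | \sum_j u 0 j * (r j : nat)%:R == 0].

Lemma hyperplane_coord_eq (u : 'rV['F_p]_n) (j0 : 'I_n) (r r' : {ffun 'I_n -> 'I_p}) :
  u 0 j0 != 0 -> r \in hyperplane u -> r' \in hyperplane u ->
  (forall j, j != j0 -> r j = r' j) -> r = r'.
Proof.
rewrite !inE => u_j0 /eqP ur /eqP ur' rr'; apply/ffunP => j.
case: (eqVneq j j0) => [->{j}|/rr' //].
rewrite (bigD1 j0) // in ur; rewrite (bigD1 j0) // in ur'.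
pose rest := \sum_(j | j != j0) u 0 j * ((r' j : nat)%:R : 'F_p).
have rest_eq : \sum_(j | j != j0) u 0 j * (r j : nat)%:R = rest.
  by apply: eq_bigr => j /rr' ->.
apply/Fp_natr_inj/(mulfI u_j0)/(addIr rest).
by rewrite ur' -rest_eq.
Qed.

Lemma card_hyperplane (u : 'rV['F_p]_n) : u != 0 -> (#|hyperplane u| * p <= p ^ n)%N.
Proof.
case/rV0Pn => j0 u_j0.
pose set_j0 (x : {ffun 'I_n -> 'I_p} * 'I_p) :=
  [ffun j => if j == j0 then x.2 else x.1 j].
have set_j0_inj : {in setX (hyperplane u) setT &, injective set_j0}.
  move=> [r k] [r' k']; rewrite !in_setX !in_setT /= !andbT => ur ur' /ffunP eq_set.
  have := eq_set j0; rewrite !ffunE eqxx /= => ->.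
  congr (_, _); apply: (hyperplane_coord_eq u_j0 ur ur') => j /negbTE j_j0.
  by have := eq_set j; rewrite !ffunE j_j0.
have <- : #|setX (hyperplane u) [set: 'I_p]| = (#|hyperplane u| * p)%N.
  by rewrite cardsX cardsT card_ord.
have <- : #|{ffun 'I_n -> 'I_p}| = (p ^ n)%N by rewrite card_ffun !card_ord.
by rewrite -(card_in_imset set_j0_inj) max_card.
Qed.

Lemma card_rank_deficient (m : nat) :
  (#|[set Q : {ffun 'I_m -> {ffun 'I_n -> 'I_p}} |
       \rank (\matrix_(i, j) ((Q i j : nat)%:R : 'F_p)) < n]| * p ^ m
    <= p ^ n * p ^ (n * m))%N.
Proof.
set H := fun u => [set Q : {ffun 'I_m -> {ffun 'I_n -> 'I_p}} |
                    [forall i, Q i \in hyperplane u]].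
have sub_H : [set Q : {ffun 'I_m -> {ffun 'I_n -> 'I_p}} |
                (\rank (\matrix_(i, j) ((Q i j : nat)%:R : 'F_p)) < n)%N]
               \subset \bigcup_(u | u != 0) H u.
  apply/subsetP => Q; rewrite inE => /exists_ker_row[u u_nz uQ].
  apply/bigcupP; exists u => //; rewrite inE; apply/forallP => i.
  have := congr1 (fun M : 'M_(1, m) => M 0 i) uQ; rewrite !mxE => uQi.
  by rewrite inE; apply/eqP; rewrite -[RHS]uQi; apply: eq_bigr => j _; rewrite !mxE.
apply: (@leq_trans ((\sum_(u : 'rV['F_p]_n | u != 0) #|H u|) * p ^ m)).
  by rewrite leq_mul2r (leq_trans (subset_leq_card sub_H)) ?leq_card_bigcup ?orbT.
rewrite big_distrl /= (@leq_trans (\sum_(u : 'rV['F_p]_n) p ^ (n * m))) //.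
  rewrite big_mkcond /= leq_sum // => u _; case: ifP => // u_nz.
  rewrite card_ffun_allin card_ord -expnMn expnM.
  exact/leq_expn2r/card_hyperplane.
by rewrite sum_nat_const card_mx card_Fp // mul1n.
Qed.

End Hyperplanes.

Lemma count_ratio_bound (F : numFieldType) (p n N a : nat) : (0 < p)%N ->
  (3 * p ^ n <= 4 * a)%N -> (N * p ^ n <= p ^ (n * (2 * n)))%N ->
  (N%:R / (a ^ (2 * n))%:R : F) <= ((9 * p)%:R / 16%:R) ^- n.
Proof.
move=> p_gt0 le_pa le_N.
have a_gt0 : (0 < a)%N.
  by rewrite -(ltn_pmul2l (isT : 0 < 4)%N) (leq_trans _ le_pa) ?muln_gt0 ?expn_gt0 ?p_gt0.
have le_nat : (N * (9 * p) ^ n <= 16 ^ n * a ^ (2 * n))%N.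
  rewrite expnMn mulnCA (@leq_trans ((3 * p ^ n) ^ (2 * n))) //.
    by rewrite expnMn -expnM (expnM 3 2 n) leq_mul2l le_N orbT.
  have -> : (16 ^ n = 4 ^ (2 * n))%N by rewrite expnM.
  by rewrite -expnMn leq_expn2r.
rewrite -exprVn invf_div expr_div_n -!natrX ler_pdivrMr ?ltr0n ?expn_gt0 ?a_gt0 //.
by rewrite mulrAC ler_pdivlMr ?ltr0n ?expn_gt0 ?muln_gt0 ?p_gt0 // -!natrM ler_nat.
Qed.

Theorem lemma5p3 (lam n : nat) (R : comNzRingType) (f : {mpoly R[n]}) (e : 'X_{1..n}) :
  prime lam ->
  e \in msupp f ->
  (3%:R / 4%:R : rat) <=
    (#|[set s : {ffun 'I_n -> 'I_lam} | avoids_collision f e s]|%:R / (lam ^ n)%N%:R) ->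
  (#|[set Q : {ffun 'I_(2 * n) -> {ffun 'I_n -> 'I_lam}} |
        [forall i, avoids_collision f e (Q i)] && (\rank (rowsmx Q) < n)%N]|%:R
     / #|[set Q : {ffun 'I_(2 * n) -> {ffun 'I_n -> 'I_lam}} |
        [forall i, avoids_collision f e (Q i)]]|%:R : rat)
  <= ((9 * lam)%N%:R / 16%:R) ^- n.
Proof.
move=> lam_prime _ frac_S.
set S := [set s | avoids_collision f e s] in frac_S.
have lam_n_gt0 : (0 < lam ^ n)%N by rewrite expn_gt0 prime_gt0.
have S_large : (3 * lam ^ n <= 4 * #|S|)%N.
  move: frac_S; rewrite ler_pdivlMr ?ltr0n // mulrAC ler_pdivrMr ?ltr0n //.
  by rewrite -!natrM ler_nat [(#|S| * _)%N]mulnC.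
have card_cond : #|[set Q : {ffun 'I_(2 * n) -> {ffun 'I_n -> 'I_lam}} |
                    [forall i, avoids_collision f e (Q i)]]| = (#|S| ^ (2 * n))%N.
  rewrite -[in RHS](card_ord (2 * n)) -card_ffun_allin; apply: eq_card => Q.
  by rewrite !inE; apply: eq_forallb => i; rewrite inE.
have card_bad : (#|[set Q : {ffun 'I_(2 * n) -> {ffun 'I_n -> 'I_lam}} |
                    [forall i, avoids_collision f e (Q i)] && (\rank (rowsmx Q) < n)%N]|
                  * lam ^ n <= lam ^ (n * (2 * n)))%N.
  have lam_2n : (lam ^ (2 * n) = lam ^ n * lam ^ n)%N by rewrite mul2n -addnn expnD.
  have := @card_rank_deficient lam n lam_prime (2 * n).
  rewrite lam_2n mulnA [X in (_ <= X)%N]mulnC leq_pmul2r //; apply: leq_trans.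
  rewrite leq_mul2r subset_leq_card ?orbT //.
  by apply/subsetP => Q; rewrite !inE => /andP[].
by rewrite card_cond count_ratio_bound ?prime_gt0.
Qed.
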